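(* There is a constant $c>0$ such that for every $n\in\mathbb{N}$ that is a multiple of $7$, $\mathrm{fw}(\mathrm{HWB}_n)\ge 2^{cn}$. In particular, every TDD computing $\mathrm{HWB}_n$ has size at least $2^{cn}$.
   Context: $\mathrm{HWB}_n$ is the Boolean function over $x_1,\dots,x_n$ with $\mathrm{HWB}_n(x_1,\dots,x_n)=1$ iff $x_S=1$ where $S=\sum_{i=1}^n x_i$ (when $S=0$ the value is $0$). A vtree over $X$ is a rooted tree whose internal nodes have exactly two ordered children and whose leaves are labeled bijectively by $X$; $X_t$ is the set of variables below node $t$. For a Boolean function $f$ over $X$, $Y\subseteq X$ and $\tau\in 2^Y$, $f[\tau]$ is the function over $X\setminus Y$ mapping $\sigma$ to $f(\sigma\times\tau)$; $S_t$ is the number of distinct non-trivial (having a model) functions $f[\tau]$ with $\tau\in 2^{X_t}$; $\mathrm{fw}(f)[T]=\max_t S_t$ and $\mathrm{fw}(f)=\min_T \mathrm{fw}(f)[T]$ over all vtrees $T$ over $X$. An nTDD $C=(N,E)$ respecting $T$ has nodes $N=\biguplus_t N_t$ ($t$-nodes); leaf $t$-nodes (leaf labeled $x$) carry a label in $\{x,\neg x,1,0\}$ and compute that literal/constant; an internal $t$-node $g$ with children $t_1,t_2$ has inputs $E(g)\subseteq N_{t_1}\times N_{t_2}$ and computes $f_g=\bigvee_{(g_1,g_2)\in E(g)}(f_{g_1}\wedge f_{g_2})$ over $X_t$; the root-node $\mathrm{out}$ gives the computed function. Size $|C|=\sum_g|E(g)|$. A TDD is an nTDD (respecting some vtree)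 such that for every leaf $t$ labeled $x$, $N_t$ has at most one node labeled $x$, at most one labeled $\neg x$, at most one labeled $1$, and if one is labeled $1$ all others are labeled $0$; and for every internal $t$, distinct $t$-nodes have disjoint input sets. *)

From mathcomp Require Import all_boot.
From Stdlib Require Import Reals.

Set Implicit Arguments.
Unset Strict Implicit.
Unset Printing Implicit Defensive.

(* Variables x_1..x_n are represented by 'I_n (x_{i+1} <-> i : 'I_n).
   Assignments are {ffun 'I_n -> bool}; a Boolean function over X is
   a map from assignments to bool. *)
Definition assign (n : nat) := {ffun 'I_n -> bool}.
Definition boolfun (n : nat) := assign n -> bool.

(* HWB_n(x) = 1 iff S := sum x_i > 0 and x_S = 1, i.e. variable index S-1. *)
Definition HWB (n : nat) : boolfun n :=
  fun x => [exists i : 'I_n, (i.+1 == \sum_(j < n) nat_of_bool (x j)) && x i].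

Inductive vtree (n : nat) : Type :=
| VLeaf of 'I_n
| VNode of vtree n & vtree n.

Fixpoint vleaves n (t : vtree n) : seq 'I_n :=
  match t with
  | VLeaf x => [:: x]
  | VNode l r => vleaves l ++ vleaves r
  end.

Definition vtree_over n (T : vtree n) : Prop := perm_eq (vleaves T) (enum 'I_n).

Fixpoint subtrees n (t : vtree n) : seq (vtree n) :=
  t :: match t with
       | VLeaf _ => [::]
       | VNode l r => subtrees l ++ subtrees r
       end.

Definition merge n (Y : seq 'I_n) (sigma tau : assign n) : assign n :=
  [ffun i => if i \in Y then tau i else sigma i].

(* f[tau] as a function over X \ Y (represented on full assignments, it
   ignores the values on Y, so equality of these finfuns is equality of
   the functions over X \ Y). *)
Definition subfun n (f : boolfun n) (Y : seq 'I_n) (tau : assign n)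
  : {ffun assign n -> bool} := [ffun sigma => f (merge Y sigma tau)].

Definition S_t n (f : boolfun n) (t : vtree n) : nat :=
  #|[set subfun f (vleaves t) tau | tau : assign n
      & [exists sigma : assign n, subfun f (vleaves t) tau sigma]]|.

Definition fwT n (f : boolfun n) (T : vtree n) : nat :=
  \max_(t <- subtrees T) S_t f t.

Inductive lit := LPos | LNeg | LOne | LZero.

Definition lit_eqb (a b : lit) : bool :=
  match a, b with
  | LPos, LPos | LNeg, LNeg | LOne, LOne | LZero, LZero => true
  | _, _ => false
  end.

(* A circuit following the shape of a vtree.  t-nodes of a leaf t are the
   indices of the label list; t-nodes of an internal t are the indices of
   the list of input sets E(g) (each a list of pairs of child-node indices). *)
Inductive ntdd (n : nat) : Type :=
| TLeaf of 'I_n & seq lit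
| TNode of ntdd n & ntdd n & seq (seq (nat * nat)).

Fixpoint respects n (C : ntdd n) (T : vtree n) : bool :=
  match C, T with
  | TLeaf x _, VLeaf y => x == y
  | TNode C1 C2 _, VNode t1 t2 => respects C1 t1 && respects C2 t2
  | _, _ => false
  end.

Definition nnodes n (C : ntdd n) : nat :=
  match C with TLeaf _ ls => size ls | TNode _ _ gs => size gs end.

Fixpoint wf_ntdd n (C : ntdd n) : Prop :=
  match C with
  | TLeaf _ _ => True
  | TNode C1 C2 gs =>
      wf_ntdd C1 /\ wf_ntdd C2 /\
      (forall E, E \in gs -> uniq E /\
         forall p, p \in E -> p.1 < nnodes C1 /\ p.2 < nnodes C2)
  end.

Definition eval_lit (l : lit) (b : bool) : bool :=
  match l with LPos => b | LNeg => ~~ b | LOne => true | LZero => false end.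

Fixpoint eval_node n (C : ntdd n) (i : nat) (a : assign n) : bool :=
  match C with
  | TLeaf x ls => eval_lit (nth LZero ls i) (a x)
  | TNode C1 C2 gs =>
      has (fun p => eval_node C1 p.1 a && eval_node C2 p.2 a) (nth [::] gs i)
  end.

Fixpoint ntdd_size n (C : ntdd n) : nat :=
  match C with
  | TLeaf _ _ => 0
  | TNode C1 C2 gs => ntdd_size C1 + ntdd_size C2 + sumn (map size gs)
  end.

Fixpoint is_tdd n (C : ntdd n) : Prop :=
  match C with
  | TLeaf _ ls =>
      count (lit_eqb LPos) ls <= 1 /\ count (lit_eqb LNeg) ls <= 1 /\
      count (lit_eqb LOne) ls <= 1 /\
      (has (lit_eqb LOne) ls ->
         forall i, i < size ls -> ~~ lit_eqb (nth LZero ls i) LOne ->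
                   nth LZero ls i = LZero)
  | TNode C1 C2 gs =>
      is_tdd C1 /\ is_tdd C2 /\
      (forall i j, i < size gs -> j < size gs -> i <> j ->
         forall p, p \in nth [::] gs i -> p \notin nth [::] gs j)
  end.

Definition computes n (C : ntdd n) (out : nat) (f : boolfun n) : Prop :=
  out < nnodes C /\ forall a, eval_node C out a = f a.

From Pilot Require Import Defs.
From mathcomp Require Import all_boot zify.
From Stdlib Require Import Reals Lra.

Set Implicit Arguments.
Unset Strict Implicit.
Unset Printing Implicit Defensive.

(** Pick a node t of the vtree whose variable set Y = X_t is balanced,
    n/3 <= |Y| <= 2n/3, and let m = n - |Y|.  Since HWB_n looks at the bit at
    the position given by the weight, an assignment A of weight a to Y can be
    probed at any position x with a <= x+1 <= a+m by completing it outside Y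
    with x+1-a ones.  Taking p = max(1, n/24) >= n/48 disjoint pairs of
    positions of Y that lie in one such window, together with a fixed filler,
    and choosing one element of each pair gives 2^p assignments to Y of equal
    weight, each satisfiable and any two separated by a common completion (a
    fooling family).  Distinct
    members induce distinct non-trivial subfunctions f[tau], so S_t >= 2^p.  In
    a TDD every assignment makes at most one t-node true; each member makes
    exactly one true, distinct members need distinct t-nodes, and each of these
    has an input, so |C| >= 2^p. *)

Lemma exists_subset_card (T : finType) (A : {set T}) k :
  k <= #|A| -> exists2 B : {set T}, B \subset A & #|B| = k.
Proof.
move=> kA; exists [set x in take k (enum A)].
  by apply/subsetP => x; rewrite inE => /mem_take; rewrite mem_enum.
by rewrite cardsE (card_uniqP _) ?take_uniq ?enum_uniq // size_take -cardE; case: ltnP; lia.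
Qed.

Lemma exists_subset_card_mem (T : finType) (A : {set T}) z k :
  z \in A -> 0 < k <= #|A| -> exists2 B : {set T}, B \subset A & z \in B /\ #|B| = k.
Proof.
move=> zA /andP[k0 kA].
have [B BA cB] : exists2 B : {set T}, B \subset A :\ z & #|B| = k.-1.
  by apply: exists_subset_card; rewrite (cardsD1 z A) zA in kA; lia.
have zB : z \notin B by apply/negP => /(subsetP BA); rewrite !inE eqxx.
exists (z |: B); last by rewrite setU11 cardsU1 zB cB; split => //; lia.
by rewrite subUset sub1set zA (subset_trans BA) // subD1set.
Qed.

Lemma exists_inj_into (J T : finType) (A : {set T}) :
  #|J| <= #|A| -> exists2 e : J -> T, injective e & forall j, e j \in A.
Proof.
move=> JA; exists (fun j => enum_val (widen_ord JA (enum_rank j))); last by move=> j; apply: enum_valP.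
by move=> i j /enum_val_inj /(congr1 val) /= /val_inj /enum_rank_inj.
Qed.

Lemma card_range_le n a b : #|[set i : 'I_n | a <= i < b]| <= b - a.
Proof.
rewrite cardE -(size_map val) -[b - a](size_iota a); apply: uniq_leq_size.
  by rewrite (map_inj_uniq val_inj) enum_uniq.
by move=> x /mapP[i]; rewrite mem_enum inE => + ->; rewrite mem_iota /=; lia.
Qed.

Lemma exists_mem_leq_cardC n (Y : {set 'I_n}) : 0 < #|Y| -> exists2 u, u \in Y & u <= #|~: Y|.
Proof.
move=> Y0; apply/exists_inP; apply: contraT => /exists_inPn Y_large.
have : Y \subset [set i : 'I_n | #|~: Y|.+1 <= i < n].
  by apply/subsetP => i iY; rewrite inE ltn_ord andbT ltnNge Y_large.
have Ym : #|Y| + #|~: Y| = n by rewrite cardsC card_ord.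
by move/subset_leq_card/leq_trans => /(_ _ (card_range_le _ _ _)); lia.
Qed.

Lemma card_nonempty_le_sumn (T : eqType) (s : seq (seq T)) :
  #|[set k : 'I_(size s) | nth [::] s k != [::]]| <= sumn (map size s).
Proof.
rewrite -sum1_card big_mkcond /= sumnE big_map (big_nth [::]) big_mkord.
by apply: leq_sum => k _; rewrite inE; case: (nth [::] s k).
Qed.

Definition leafset n (t : vtree n) : {set 'I_n} := [set i | i \in vleaves t].

Lemma vtree0_empty (T : vtree 0) : False.
Proof. by elim: T => [[]|]. Qed.

Lemma vleaves_subtree n (T t : vtree n) :
  List.In t (subtrees T) -> infix (vleaves t) (vleaves T).
Proof.
elim: T => [x|l IHl r IHr] [<-|]; rewrite ?infix_refl //.
by move=> /List.in_app_iff[/IHl/infix_catr|/IHr/infix_catl]; apply.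
Qed.

Lemma exists_balanced_subtree n (T : vtree n) : 2 <= n -> n <= 3 * size (vleaves T) ->
  exists2 t, List.In t (subtrees T) & n <= 3 * size (vleaves t) <= 2 * n.
Proof.
move=> n2; elim: T => [x|l IHl r IHr] /= TX.
  by exists (VLeaf x); [left | rewrite /= TX; lia].
case: (leqP (3 * size (vleaves l ++ vleaves r)) (2 * n)) => TX2.
  by exists (VNode l r); [left | rewrite /= TX TX2].
rewrite size_cat in TX TX2; case: (leqP (size (vleaves r)) (size (vleaves l))) => lr.
  by have [t tl tb] := IHl ltac:(lia); exists t => //; right; apply/List.in_app_iff; left.
by have [t tr tb] := IHr ltac:(lia); exists t => //; right; apply/List.in_app_iff; right.
Qed.

Definition assign_of n (A : {set 'I_n}) : assign n := [ffun i => i \in A].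

Lemma weight_assign_of n (A : {set 'I_n}) :
  \sum_(j < n) nat_of_bool (assign_of A j) = #|A|.
Proof.
rewrite -sum1_card [RHS]big_mkcond /=; apply: eq_bigr => j _.
by rewrite ffunE; case: (j \in A).
Qed.

Lemma HWB_assign_of n (A : {set 'I_n}) (x : 'I_n) :
  x.+1 = #|A| -> HWB (assign_of A) = (x \in A).
Proof.
move=> xA; rewrite /HWB weight_assign_of -xA; apply/existsP/idP => [[y]|xA'].
  by rewrite ffunE => /andP[/eqP[/val_inj ->]].
by exists x; rewrite eqxx ffunE.
Qed.

Lemma merge_assign_of n (t : vtree n) (A B : {set 'I_n}) :
  A \subset leafset t -> B \subset ~: leafset t ->
  Defs.merge (vleaves t) (assign_of B) (assign_of A) = assign_of (A :|: B).
Proof.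
move=> /subsetP At /subsetP Bt; apply/ffunP => i; rewrite !ffunE inE.
case: ifP => it.
  have /negbTE -> // : i \notin B by apply/negP => /Bt; rewrite !inE it.
  by rewrite orbF.
have /negbTE -> // : i \notin A by apply/negP => /At; rewrite inE it.
Qed.

(* The members F i are partial assignments to Y, given by their sets of
   ones; completions S are assignments to the complement of Y. *)
Definition fooling_family n (f : boolfun n) (Y : {set 'I_n}) (I : finType)
    (F : I -> {set 'I_n}) : Prop :=
  [/\ forall i, F i \subset Y,
      forall i, exists2 S : {set 'I_n}, S \subset ~: Y & f (assign_of (F i :|: S))
    & forall i j, i != j -> exists2 S : {set 'I_n}, S \subset ~: Y &
        f (assign_of (F i :|: S)) != f (assign_of (F j :|: S))].

Lemma fooling_family_le_S_t n (f : boolfun n) (t : vtree n) (I : finType)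
    (F : I -> {set 'I_n}) :
  fooling_family f (leafset t) F -> #|I| <= S_t f t.
Proof.
case=> Ft Fsat Fsep.
pose g i := subfun f (vleaves t) (assign_of (F i)).
have gE i (S : {set 'I_n}) : S \subset ~: leafset t -> g i (assign_of S) = f (assign_of (F i :|: S)).
  by move=> St; rewrite /g /subfun ffunE merge_assign_of.
have g_inj : injective g.
  move=> i j gij; apply/eqP; apply: contraT => ij.
  by have [S St] := Fsep i j ij; rewrite -!gE // gij eqxx.
rewrite -cardsT -(card_imset _ g_inj); apply: subset_leq_card.
apply/subsetP => _ /imsetP[i _ ->]; have [S St fS] := Fsat i.
apply/imsetP; exists (assign_of (F i)) => //; rewrite inE; apply/existsP.
by exists (assign_of S); rewrite gE.
Qed.

Lemma S_t_le_fwT n (f : boolfun n) (T t : vtree n) :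
  List.In t (subtrees T) -> S_t f t <= fwT f T.
Proof.
rewrite /fwT; elim: (subtrees T) => [//|t' s IH] /= [<-|ts]; rewrite big_cons.
  exact: leq_maxl.
exact: leq_trans (IH ts) (leq_maxr _ _).
Qed.

Lemma eval_node_local n (t : vtree n) (D : ntdd n) (a b : assign n) :
  respects D t -> {in vleaves t, a =1 b} -> forall k, eval_node D k a = eval_node D k b.
Proof.
elim: t D => [x|l IHl r IHr] [y ls|C1 C2 gs] //= => [/eqP <- ab k|/andP[rl rr] ab k].
  by rewrite ab // mem_seq1.
apply: eq_has => -[k1 k2] /=; rewrite (IHl _ rl) ?(IHr _ rr) // => i ti; apply: ab.
  by rewrite mem_cat ti orbT.
by rewrite mem_cat ti.
Qed.

Lemma eval_node_setU_outside n (t : vtree n) (D : ntdd n) (A S : {set 'I_n}) k :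
  respects D t -> S \subset ~: leafset t ->
  eval_node D k (assign_of (A :|: S)) = eval_node D k (assign_of A).
Proof.
move=> rD /subsetP St; apply: eval_node_local rD _ k => x xt; rewrite !ffunE inE.
have /negbTE -> // : x \notin S by apply/negP => /St; rewrite !inE xt.
by rewrite orbF.
Qed.

Lemma count_le1_nth_inj (T : Type) (P : pred T) (s : seq T) x0 i j :
  count P s <= 1 -> i < size s -> j < size s ->
  P (nth x0 s i) -> P (nth x0 s j) -> i = j.
Proof.
elim: s i j => [|x s IH] [|i] [|j] //= c1 si sj Pi Pj.
- have : has P s by apply/(has_nthP x0); exists j.
  by rewrite has_count; move: c1; rewrite Pi; lia.
- have : has P s by apply/(has_nthP x0); exists i.
  by rewrite has_count; move: c1; rewrite Pj; lia.
- by congr S; apply: IH Pi Pj => //; move: c1; case: (P x) => /=; lia.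
Qed.

Lemma tdd_leaf_true_unique n (x : 'I_n) ls (a : assign n) i j :
  is_tdd (TLeaf x ls) -> eval_node (TLeaf x ls) i a -> eval_node (TLeaf x ls) j a -> i = j.
Proof.
case=> pos1 [neg1 [one1 one0]] /=.
(* every true node carries the label [lab], which occurs at most once *)
pose lab := if has (lit_eqb LOne) ls then LOne else if a x then LPos else LNeg.
have labP k : eval_lit (nth LZero ls k) (a x) -> k < size ls /\ lit_eqb lab (nth LZero ls k).
  move=> hk; have ks : k < size ls by case: ltnP hk => // ?; rewrite nth_default.
  split=> //; rewrite /lab; case: ifP => [hO|/negbT hO].
    by move: (one0 hO k ks) hk; case: (nth LZero ls k) => // /(_ isT).
  have notO : nth LZero ls k <> LOne.
    by move=> e; case/negP: hO; apply/(has_nthP LZero); exists k; rewrite ?e.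
  by move: notO hk; case: (nth LZero ls k); case: (a x).
have lab1 : count (lit_eqb lab) ls <= 1 by rewrite /lab; case: ifP; case: (a x).
by move=> /labP[si Pi] /labP[sj Pj]; apply: count_le1_nth_inj lab1 si sj Pi Pj.
Qed.

Lemma tdd_true_node_unique n (D : ntdd n) (a : assign n) i j :
  is_tdd D -> eval_node D i a -> eval_node D j a -> i = j.
Proof.
elim: D i j => [x ls|C1 IH1 C2 IH2 gs] i j; first exact: tdd_leaf_true_unique.
case=> tdd1 [tdd2 disj] /= /hasP[[p1 p2] pi /andP[/= h1 h2]] /hasP[[q1 q2] qj /andP[/= k1 k2]].
move: qj; rewrite -(IH1 _ _ tdd1 h1 k1) -(IH2 _ _ tdd2 h2 k2) => qj.
apply/eqP; apply: contraT => /eqP ij.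
have gs_size k : (p1, p2) \in nth [::] gs k -> k < size gs.
  by case: ltnP => // ks; rewrite nth_default.
by move: (disj i j (gs_size i pi) (gs_size j qj) ij _ pi); rewrite qj.
Qed.

(* D sits in C at a node with variables X: the values of C depend on the
   variables of X only through the values of D, and, as gates only use AND and
   OR, C is false wherever all nodes of D are. *)
Definition subcircuit n (C D : ntdd n) (X : seq 'I_n) : Prop :=
  [/\ is_tdd C -> is_tdd D, ntdd_size D <= ntdd_size C,
      forall a b : assign n, (forall i, i \notin X -> a i = b i) ->
        (forall k, eval_node D k a = eval_node D k b) ->
        forall k, eval_node C k a = eval_node C k b
    & forall a, (forall k, ~~ eval_node D k a) -> forall k, ~~ eval_node C k a].

Lemma subcircuit_refl n (C : ntdd n) X : subcircuit C C X.
Proof. by split. Qed.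

Lemma subcircuit_nodeL n (C1 C2 D : ntdd n) gs (t2 : vtree n) X :
  respects C2 t2 -> {in vleaves t2, forall i, i \notin X} ->
  subcircuit C1 D X -> subcircuit (TNode C1 C2 gs) D X.
Proof.
move=> r2 t2X [tddD sizeD evalD falseD]; split=> [[/tddD]//||a b ab Dab k|a Dfalse k] /=.
- by move: sizeD; lia.
- apply: eq_has => -[k1 k2] /=; rewrite (evalD a b ab Dab).
  by rewrite (eval_node_local r2 (a := a) (b := b)) // => i /t2X /ab.
- by apply/hasPn => -[k1 k2] _ /=; rewrite (negbTE (falseD a Dfalse k1)).
Qed.

Lemma subcircuit_nodeR n (C1 C2 D : ntdd n) gs (t1 : vtree n) X :
  respects C1 t1 -> {in vleaves t1, forall i, i \notin X} ->
  subcircuit C2 D X -> subcircuit (TNode C1 C2 gs) D X.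
Proof.
move=> r1 t1X [tddD sizeD evalD falseD]; split=> [[_ [/tddD]]//||a b ab Dab k|a Dfalse k] /=.
- by move: sizeD; lia.
- apply: eq_has => -[k1 k2] /=; rewrite (evalD a b ab Dab).
  by rewrite (eval_node_local r1 (a := a) (b := b)) // => i /t1X /ab.
- by apply/hasPn => -[k1 k2] _ /=; rewrite (negbTE (falseD a Dfalse k2)) andbF.
Qed.

Lemma exists_subcircuit n (C : ntdd n) (T t : vtree n) :
  respects C T -> uniq (vleaves T) -> List.In t (subtrees T) ->
  exists2 D, respects D t & subcircuit C D (vleaves t).
Proof.
elim: T C => [x|l IHl r IHr] [y ls|C1 C2 gs] //=.
  by move=> rC _ [<-|[]]; exists (TLeaf y ls) => //; apply: subcircuit_refl.
move=> /andP[rl rr]; rewrite cat_uniq => /and3P[ul /hasPn lr ur].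
case=> [<-|/List.in_app_iff[tl|tr]].
- by exists (TNode C1 C2 gs); [rewrite /= rl rr | apply: subcircuit_refl].
- have [D rD sD] := IHl C1 rl ul tl; exists D => //; apply: subcircuit_nodeL rr _ sD.
  by move=> i /lr; apply: contra; apply: mem_infix (vleaves_subtree tl) i.
- have [D rD sD] := IHr C2 rr ur tr; exists D => //; apply: subcircuit_nodeR rl _ sD.
  move=> i il; apply/negP => /(mem_infix (vleaves_subtree tr)) /lr.
  by rewrite il.
Qed.

Lemma fooling_family_le_subcircuit n (f : boolfun n) (t : vtree n) (C C1 C2 : ntdd n) gs
    out (I : finType) (F : I -> {set 'I_n}) :
  fooling_family f (leafset t) F -> respects (TNode C1 C2 gs) t ->
  subcircuit C (TNode C1 C2 gs) (vleaves t) -> is_tdd C -> computes C out f ->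
  #|I| <= ntdd_size C.
Proof.
set D := TNode C1 C2 gs.
case=> Ft Fsat Fsep rD [tddD sizeD evalD falseD] tddC [_ Cf].
have {}tddD := tddD tddC.
have D_local i (S : {set 'I_n}) k : S \subset ~: leafset t ->
    eval_node D k (assign_of (F i :|: S)) = eval_node D k (assign_of (F i)).
  by move=> St; apply: eval_node_setU_outside rD St.
have D_true i : exists k : 'I_(size gs), eval_node D k (assign_of (F i)).
  have [S St fS] := Fsat i; apply/existsP; apply: contraT => /existsPn Dfalse.
  have : ~~ eval_node C out (assign_of (F i :|: S)).
    apply: falseD => k; rewrite D_local //; case: (ltnP k (size gs)) => ks.
      exact: (Dfalse (Ordinal ks)).
    by rewrite /D /= nth_default.
  by rewrite Cf fS.
pose node i := xchoose (D_true i).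
have nodeP i : eval_node D (node i) (assign_of (F i)) := xchooseP (D_true i).
have node_inj : injective node.
  move=> i j eij; apply/eqP; apply: contraT => ij.
  have [S St fij] := Fsep i j ij.
  have D_at c k : eval_node D k (assign_of (F c :|: S)) = (k == node c).
    rewrite D_local //; apply/idP/eqP => [Dk|->]; last exact: nodeP.
    exact: tdd_true_node_unique tddD Dk (nodeP c).
  case/negP: fij; apply/eqP; rewrite -!Cf; apply: evalD => [x xt|k]; last by rewrite !D_at eij.
  have Fc c : x \notin F c by apply: contra xt => /(subsetP (Ft c)); rewrite inE.
  by rewrite !ffunE !inE !(negbTE (Fc _)).
have node_used i : nth [::] gs (node i) != [::].
  by move: (nodeP i); rewrite /D /=; case: (nth [::] gs _).
apply: leq_trans sizeD; apply: leq_trans (leq_addl (ntdd_size C1 + ntdd_size C2) _).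
apply: leq_trans (card_nonempty_le_sumn gs).
rewrite -cardsT -(card_imset _ node_inj); apply: subset_leq_card.
by apply/subsetP => _ /imsetP[i _ ->]; rewrite inE.
Qed.

Lemma fooling_family_le_ntdd_size n (f : boolfun n) (T t l r : vtree n) (C : ntdd n) out
    (I : finType) (F : I -> {set 'I_n}) :
  List.In t (subtrees T) -> t = VNode l r -> fooling_family f (leafset t) F ->
  respects C T -> uniq (vleaves T) -> is_tdd C -> computes C out f ->
  #|I| <= ntdd_size C.
Proof.
move=> tT tlr FF rC uT tddC Cf.
have [[y ls|C1 C2 gs] rD sD] := exists_subcircuit rC uT tT; first by rewrite tlr in rD.
exact: fooling_family_le_subcircuit FF rD sD tddC Cf.
Qed.

(* Position x can be probed in assignments of weight a to Y: a completion
   with x+1-a ones outside Y brings the weight to x+1; if x is itself outside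
   Y, the completion has to contain x and so needs at least one 1. *)
Definition readable n (Y : {set 'I_n}) a (x : 'I_n) : bool :=
  (a <= x.+1 <= a + #|~: Y|) && ((x \in Y) || (a <= x)).

Lemma HWB_reader n (Y : {set 'I_n}) a (x : 'I_n) : readable Y a x ->
  exists2 S : {set 'I_n}, S \subset ~: Y & forall B : {set 'I_n}, B \subset Y -> #|B| = a ->
    HWB (assign_of (B :|: S)) = (x \in Y) ==> (x \in B).
Proof.
case/andP => /andP[ax xm] xYa; set m := #|~: Y| in xm.
have [S SY [xS cS]] : exists2 S : {set 'I_n}, S \subset ~: Y &
    (x \notin Y -> x \in S) /\ #|S| = x.+1 - a.
  case: (boolP (x \in Y)) => xY.
    by have [S SY cS] := @exists_subset_card _ (~: Y) (x.+1 - a) ltac:(rewrite -/m; lia); exists S.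
  have xY' : x \in ~: Y by rewrite inE.
  have k_range : 0 < x.+1 - a <= m by move: xYa; rewrite (negbTE xY) /=; lia.
  by have [S SY [xS cS]] := exists_subset_card_mem xY' k_range; exists S.
exists S => // B BY cB.
have BS : B :&: S = set0.
  apply/setP => i; rewrite !inE; apply/negP => /andP[/(subsetP BY) iY /(subsetP SY)].
  by rewrite inE iY.
rewrite (@HWB_assign_of _ _ x); last by rewrite cardsU BS cards0 cB cS; lia.
rewrite inE; case: (boolP (x \in Y)) => xY /=; last by rewrite xS ?orbT.
have /negbTE -> : x \notin S by apply/negP => /(subsetP SY); rewrite inE xY.
by rewrite orbF.
Qed.

(* A fixed filler Fi plus one element out of each pair {e (true, j), e (false, j)};
   all these sets have the same weight #|Fi| + #|J|. *)
Definition pair_set n (Fi : {set 'I_n}) (J : finType) (e : bool * J -> 'I_n)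
    (b : {ffun J -> bool}) : {set 'I_n} :=
  Fi :|: [set e (b j, j) | j : J].

Section PairSets.

Variables (n : nat) (Y Fi : {set 'I_n}) (J : finType) (e : bool * J -> 'I_n).
Hypotheses (e_inj : injective e) (FiY : Fi \subset Y) (eY : forall i, e i \in Y :\: Fi).

Let e_notin_Fi i : e i \notin Fi.
Proof. by move: (eY i); rewrite inE => /andP[]. Qed.

Lemma pair_set_sub b : pair_set Fi e b \subset Y.
Proof.
rewrite subUset FiY; apply/subsetP => _ /imsetP[j _ ->].
by move: (eY (b j, j)); rewrite inE => /andP[].
Qed.

Lemma card_pair_set b : #|pair_set Fi e b| = #|Fi| + #|J|.
Proof.
have e_b_inj : injective (fun j => e (b j, j)) by move=> i j /e_inj[].
rewrite cardsU (card_imset _ e_b_inj).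
suff -> : Fi :&: [set e (b j, j) | j : J] = set0 by rewrite cards0 subn0.
apply/setP => x; rewrite !inE; apply/negP => /andP[xFi /imsetP[j _ xe]].
by move: xFi; rewrite xe (negbTE (e_notin_Fi _)).
Qed.

Lemma mem_pair_set b j : (e (true, j) \in pair_set Fi e b) = b j.
Proof.
rewrite inE (negbTE (e_notin_Fi _)) /=.
by apply/imsetP/idP => [[k _ /e_inj[bk ->]]|bj]; [rewrite -bk | exists j; rewrite ?bj].
Qed.

Lemma pair_sets_fooling :
  (forall j, readable Y (#|Fi| + #|J|) (e (true, j))) ->
  (forall b, exists2 x, readable Y (#|Fi| + #|J|) x & (x \in Y) ==> (x \in pair_set Fi e b)) ->
  fooling_family (@HWB n) Y (pair_set Fi e).
Proof.
move=> e_read witness; split=> [b|b|b b' bb']; first exact: pair_set_sub.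
  have [x xr xb] := witness b; have [S SY HS] := HWB_reader xr.
  by exists S; rewrite ?HS ?card_pair_set ?pair_set_sub.
have /existsP[j bj] : [exists j, b j != b' j].
  apply: contraR bb' => /existsPn bb'; apply/eqP/ffunP => j; exact/eqP/negbNE.
have [S SY HS] := HWB_reader (e_read j); exists S => //.
have eYj : e (true, j) \in Y by move: (eY (true, j)); rewrite inE => /andP[].
by rewrite !HS ?card_pair_set ?pair_set_sub // eYj !mem_pair_set.
Qed.

End PairSets.

Lemma HWB_fooling_window n (Y : {set 'I_n}) p s :
  0 < p -> p <= s -> s + p <= #|Y| ->
  2 * p <= #|Y :&: [set i : 'I_n | s <= i < s + #|~: Y|]| ->
  exists F : {ffun 'I_p -> bool} -> {set 'I_n}, fooling_family (@HWB n) Y F.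
Proof.
move=> p0 ps spY; set m := #|~: Y|; set W := Y :&: _ => W2p.
have [e e_inj eW] : exists2 e : bool * 'I_p -> 'I_n, injective e & forall i, e i \in W.
  by apply: exists_inj_into; rewrite card_prod card_bool card_ord.
have eY i : e i \in Y by move: (eW i); rewrite inE => /andP[].
set E := [set e i | i : bool * 'I_p].
have [Fi FiYE cFi] : exists2 Fi : {set 'I_n}, Fi \subset Y :\: E & #|Fi| = s - p.
  apply: exists_subset_card.
  have EY : E \subset Y by apply/subsetP => _ /imsetP[i _ ->].
  rewrite cardsD (setIidPr EY) (card_imset _ e_inj) card_prod card_bool card_ord.
  by move: spY; lia.
have FiY : Fi \subset Y by apply: subset_trans FiYE (subsetDl _ _).
have size_s : #|Fi| + #|'I_p| = s by rewrite cFi card_ord; lia.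
have e_read i : readable Y (#|Fi| + #|'I_p|) (e i).
  by move: (eW i); rewrite size_s /readable !inE -/m => /andP[-> /andP[si sim]]; lia.
exists (pair_set Fi e); apply: pair_sets_fooling => // [i|b].
  rewrite inE eY andbT; apply/negP => /(subsetP FiYE).
  by rewrite inE => /andP[/negP[]]; apply: imset_f.
pose j0 : 'I_p := Ordinal p0.
exists (e (b j0, j0)) => //; rewrite implybE; apply/orP; right.
by rewrite inE; apply/orP; right; apply: imset_f.
Qed.

Lemma HWB_fooling_large n (Y : {set 'I_n}) p :
  0 < p -> 8 * p <= #|Y| -> #|Y| <= 2 * #|~: Y| ->
  exists F : {ffun 'I_p -> bool} -> {set 'I_n}, fooling_family (@HWB n) Y F.
Proof.
have Ym : #|Y| + #|~: Y| = n by rewrite cardsC card_ord.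
set y := #|Y| in Ym *; set m := #|~: Y| in Ym * => p0 yp ym.
pose R a b : {set 'I_n} := [set i : 'I_n | a <= i < b].
pose W s : {set 'I_n} := Y :&: R s (s + m).
pose s2 := minn (p + m) (y - p).
(* Outside the first and last p positions, Y is covered by three windows of
   length m (as y <= 2m), so one of them holds 2p elements of Y (as y >= 8p). *)
have cover : Y \subset (R 0 p :|: R (n - p) n) :|: (W p :|: W s2 :|: W (y - p)).
  apply/subsetP => i iY; rewrite !inE iY /=; move: (ltn_ord i); rewrite /s2; lia.
have yW : y <= p + p + (#|W p| + #|W s2| + #|W (y - p)|).
  have cardU (A B : {set 'I_n}) : #|A :|: B| <= #|A| + #|B| := leq_card_setU A B.
  apply: leq_trans (subset_leq_card cover) _; apply: leq_trans (cardU _ _) _.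
  apply: leq_add; last by apply: leq_trans (cardU _ _) _; rewrite leq_add2r cardU.
  apply: leq_trans (cardU _ _) (leq_add _ _).
    by apply: leq_trans (card_range_le _ _ _) _; rewrite subn0.
  by apply: leq_trans (card_range_le _ _ _) _; lia.
have window s : p <= s -> s + p <= y -> 2 * p <= #|W s| ->
    exists F : {ffun 'I_p -> bool} -> {set 'I_n}, fooling_family (@HWB n) Y F.
  exact: HWB_fooling_window.
case: (leqP (2 * p) #|W p|) => Wp; first by apply: (window p) => //; lia.
case: (leqP (2 * p) #|W s2|) => Ws2; first by apply: (window s2); rewrite // /s2; lia.
by apply: (window (y - p)); lia.
Qed.

Lemma HWB_fooling_small n (Y : {set 'I_n}) :
  2 <= #|Y| -> 2 <= #|~: Y| ->
  exists F : {ffun unit -> bool} -> {set 'I_n}, fooling_family (@HWB n) Y F.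
Proof.
have Ym : #|Y| + #|~: Y| = n by rewrite cardsC card_ord.
set m := #|~: Y| in Ym * => Y2 m2.
pose e (u v : 'I_n) (i : bool * unit) := if i.1 then u else v.
have e_inj u v : u != v -> injective (e u v).
  by move=> uv [[] []] [[] []] //; rewrite /e /= => uv_eq; move: uv; rewrite uv_eq eqxx.
have eY u v : u \in Y -> v \in Y -> forall i, e u v i \in Y :\: set0.
  by move=> uY vY [[] []]; rewrite setD0.
have read1 (x : 'I_n) : x <= m -> x \in Y -> readable Y (#|set0 : {set 'I_n}| + #|{: unit}|) x.
  by rewrite cards0 card_unit /readable -/m => xm ->; rewrite andbT; lia.
have n2 : 2 < n by lia.
pose one : 'I_n := Ordinal (ltnW n2); pose two : 'I_n := Ordinal n2.
(* Either positions 1 and 2 both lie in Y and form the pair, or one of them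
   lies outside Y and can be probed to satisfy both members. *)
have [[oneY twoY]|[z zY z12]] :
    one \in Y /\ two \in Y \/ exists2 z : 'I_n, z \notin Y & 1 <= z <= 2.
- case: (boolP (one \in Y)) => [oneY|oneY]; last by right; exists one.
  case: (boolP (two \in Y)) => [twoY|twoY]; last by right; exists two.
  by left.
- exists (pair_set set0 (e one two)); apply: pair_sets_fooling.
  + exact: e_inj.
  + exact: sub0set.
  + exact: eY.
  + by move=> j; apply: read1 => //=; lia.
  move=> b; exists (e one two (b tt, tt)); first by case: (b tt); apply: read1 => //=; lia.
  by rewrite implybE; apply/orP; right; rewrite inE; apply/orP; right; apply: imset_f.
- have [u uY um] := @exists_mem_leq_cardC n Y ltac:(lia).
  have [v vY vu] : exists2 v, v \in Y & v != u.
    have /card_gt0P[v] : 0 < #|Y :\ u| by rewrite (cardsD1 u Y) uY in Y2; lia.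
    by rewrite !inE => /andP[vu vY]; exists v.
  exists (pair_set set0 (e u v)); apply: pair_sets_fooling.
  + by apply: e_inj; rewrite eq_sym.
  + exact: sub0set.
  + exact: eY.
  + by move=> j; apply: read1.
  by move=> b; exists z; rewrite ?(negbTE zY) // /readable cards0 card_unit -/m (negbTE zY); lia.
Qed.

Lemma HWB_fooling_balanced n (Y : {set 'I_n}) : 7 <= n -> n <= 3 * #|Y| <= 2 * n ->
  exists (I : finType) (F : I -> {set 'I_n}),
    fooling_family (@HWB n) Y F /\ expn 2 (maxn 1 (n %/ 24)) <= #|I|.
Proof.
have Ym : #|Y| + #|~: Y| = n by rewrite cardsC card_ord.
move=> n7 /andP[Yl Yu]; case: (ltnP n 24) => n24.
  have [F FF] := @HWB_fooling_small n Y ltac:(lia) ltac:(lia).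
  by exists {ffun unit -> bool}, F; rewrite card_ffun card_bool card_unit divn_small.
have [F FF] := @HWB_fooling_large n Y (n %/ 24) ltac:(lia) ltac:(lia) ltac:(lia).
exists {ffun 'I_(n %/ 24) -> bool}, F; split=> //.
by rewrite card_ffun card_bool card_ord (maxn_idPr _) //; lia.
Qed.

Lemma HWB_fooling_node n (T : vtree n) : 7 <= n -> vtree_over T ->
  exists t l r, [/\ List.In t (subtrees T), t = VNode l r &
    exists (I : finType) (F : I -> {set 'I_n}),
      fooling_family (@HWB n) (leafset t) F /\ expn 2 (maxn 1 (n %/ 24)) <= #|I|].
Proof.
move=> n7 TX.
have uT : uniq (vleaves T) by rewrite (perm_uniq TX) enum_uniq.
have sT : size (vleaves T) = n by rewrite (perm_size TX) size_enum_ord.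
have [t tT tbal] := @exists_balanced_subtree n T ltac:(lia) ltac:(lia).
have ct : #|leafset t| = size (vleaves t).
  by rewrite cardsE; apply/card_uniqP; apply: infix_uniq (vleaves_subtree tT) uT.
have [l [r tlr]] : exists l r, t = VNode l r by move: tbal; case: t {tT ct} => [x|l r] /=; [lia | exists l, r].
by exists t, l, r; split=> //; apply: HWB_fooling_balanced; rewrite ?ct.
Qed.

Lemma INR_expn2 k : INR (expn 2 k) = pow 2 k.
Proof. by elim: k => [|k IH] //; rewrite expnS mult_INR IH /=; lra. Qed.

Lemma Rpower_le_fooling_size n : (Rpower 2 (/48 * INR n) <= INR (expn 2 (maxn 1 (n %/ 24))))%R.
Proof.
have n48 : n <= 48 * maxn 1 (n %/ 24) by lia.
rewrite INR_expn2 -Rpower_pow; last lra.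
apply: Rle_Rpower; first lra.
have /le_INR : (n <= 48 * maxn 1 (n %/ 24))%coq_nat by apply/leP.
rewrite mult_INR (_ : INR 48 = 48%R); [lra | by rewrite /=; lra].
Qed.

Theorem theorem19 :
  exists c : R, (0 < c)%R /\
    forall n : nat, 7 %| n ->
      (forall T : vtree n, vtree_over T ->
         (Rpower 2 (c * INR n) <= INR (fwT (@HWB n) T))%R) /\
      (forall (T : vtree n) (C : ntdd n) (out : nat),
         vtree_over T -> respects C T -> wf_ntdd C -> is_tdd C ->
         computes C out (@HWB n) ->
         (Rpower 2 (c * INR n) <= INR (ntdd_size C))%R).
Proof.
exists (/48)%R; split; first lra.
move=> n /dvdn_leq n7; case: (posnP n) => [n0 | /n7 {}n7].
  by subst n; split=> T; case: (vtree0_empty T).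
split=> [T TX | T C out TX rC _ tddC Cf];
  have [t [l [r [tT tlr [I [F [FF FI]]]]]]] := HWB_fooling_node n7 TX;
  apply: Rle_trans (Rpower_le_fooling_size n) _; apply/le_INR/leP;
  apply: leq_trans FI _.
  exact: leq_trans (fooling_family_le_S_t FF) (S_t_le_fwT _ tT).
apply: fooling_family_le_ntdd_size tT tlr FF rC _ tddC Cf.
by rewrite (perm_uniq TX) enum_uniq.
Qed.
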